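(* Let $G$ be a quasi-regular mixed lattice group and let $x,y\in G$ with $x\preceq y$. Then for every $u\in G$, $$u\curlywedge x\preceq u\curlywedge y \qquad\text{and}\qquad u\curlyvee x\preceq u\curlyvee y .$$
   Context: A mixed lattice group is a commutative group $G$ with two partial orderings $\le$ (initial order) and $\preceq$ (specific order), both translation invariant ($x\le y\Rightarrow x+z\le y+z$, and likewise for $\preceq$), such that for all $x,y\in G$ the mixed lower envelope $x\curlywedge y=\max\{w\in G: w\preceq x \text{ and } w\le y\}$ and the mixed upper envelope $x\curlyvee y=\min\{w\in G: x\preceq w \text{ and } y\le w\}$ exist, where max and min are taken with respect to $\le$. $G$ is called quasi-regular if the set $G_{sp}=\{x\in G: 0\preceq x\}$ is closed under $\curlywedge$ and $\curlyvee$. *)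

From mathcomp Require Import all_boot all_algebra.
Set Implicit Arguments. Unset Strict Implicit. Unset Printing Implicit Defensive.
Import GRing.Theory.
Local Open Scope ring_scope.

Section MixedLattice.
Variable G : zmodType.
(* le : initial order  (x <= y);  sle : specific order (x ⪯ y) *)
Variables le sle : G -> G -> Prop.

Definition partial_order (r : G -> G -> Prop) : Prop :=
  (forall x, r x x) /\
  (forall x y, r x y -> r y x -> x = y) /\
  (forall x y z, r x y -> r y z -> r x z).

Definition translation_invariant (r : G -> G -> Prop) : Prop :=
  forall x y z, r x y -> r (x + z) (y + z).

Definition is_mixed_lower (x y w : G) : Prop :=
  sle w x /\ le w y /\ (forall v, sle v x -> le v y -> le v w).

Definition is_mixed_upper (x y w : G) : Prop :=
  sle x w /\ le y w /\ (forall v, sle x v -> le y v -> le w v).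

Definition mixed_lattice_group : Prop :=
  partial_order le /\ partial_order sle /\
  translation_invariant le /\ translation_invariant sle /\
  (forall x y, exists w, is_mixed_lower x y w) /\
  (forall x y, exists w, is_mixed_upper x y w).

(* G_sp = {x | 0 ⪯ x} closed under ⋏ and ⋎ *)
Definition quasi_regular : Prop :=
  forall x y, sle 0 x -> sle 0 y ->
    (forall w, is_mixed_lower x y w -> sle 0 w) /\
    (forall w, is_mixed_upper x y w -> sle 0 w).
End MixedLattice.

(** Put [d := y - x], so that [0 ⪯ d] and [u ⋏ y = u ⋏ (x + d)].  With
    [c := u ⋏ x] one checks that [u ⋏ (x + d) = u ⋏ (c + d)], and translating
    by [-c] gives [u ⋏ (c + d) - c = (u - c) ⋏ d].  Both [u - c] and [d] lie in
    [G_sp], hence so does their mixed lower envelope by quasi-regularity, i.e.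
    [u ⋏ x ⪯ u ⋏ y].  The statement for [⋎] follows by negation, which turns
    [a ⋎ b] into [(-a) ⋏ (-b)] and reverses [⪯]. *)

From mathcomp Require Import all_boot all_algebra.
Set Implicit Arguments. Unset Strict Implicit. Unset Printing Implicit Defensive.
Import GRing.Theory.
Local Open Scope ring_scope.

Section TranslationInvariant.
Variables (G : zmodType) (r : G -> G -> Prop).
Hypothesis r_ti : translation_invariant r.

Lemma tiD2r x y z : r (x + z) (y + z) <-> r x y.
Proof. by split=> [/(r_ti (- z))|/r_ti//]; rewrite !addrK. Qed.

Lemma ti_subr_ge0 x y : r 0 (y - x) <-> r x y.
Proof. by split=> [/(r_ti x)|/(r_ti (- x))]; rewrite ?add0r ?subrK ?subrr. Qed.

Lemma tiN2 x y : r (- x) (- y) <-> r y x.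
Proof.
have oppr_ti a b : r b a -> r (- a) (- b).
  by move/(r_ti (- a - b)); rewrite addrC subrK addNKr.
by split=> [/oppr_ti|/oppr_ti//]; rewrite !opprK.
Qed.

End TranslationInvariant.

Section MixedEnvelopes.
Variables (G : zmodType) (le sle : G -> G -> Prop).
Hypothesis le_trans : forall x y z, le x y -> le y z -> le x z.
Hypothesis sle_trans : forall x y z, sle x y -> sle y z -> sle x z.
Hypothesis le_ti : translation_invariant le.
Hypothesis sle_ti : translation_invariant sle.

Lemma is_mixed_lowerDr x y w z : is_mixed_lower le sle x y w ->
  is_mixed_lower le sle (x + z) (y + z) (w + z).
Proof.
move=> [wx [wy w_max]]; split; first exact: sle_ti.
split; first exact: le_ti.
move=> v vx vy; rewrite -(subrK z v); apply: le_ti; apply: w_max.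
  by apply/(tiD2r sle_ti _ _ z); rewrite subrK.
by apply/(tiD2r le_ti _ _ z); rewrite subrK.
Qed.

Lemma is_mixed_upperN x y w : is_mixed_upper le sle x y w ->
  is_mixed_lower le sle (- x) (- y) (- w).
Proof.
move=> [xw [yw w_min]]; split; first exact/(tiN2 sle_ti).
split; first exact/(tiN2 le_ti).
move=> v vx vy; rewrite -[v]opprK; apply/(tiN2 le_ti); apply: w_min.
  by apply/(tiN2 sle_ti); rewrite opprK.
by apply/(tiN2 le_ti); rewrite opprK.
Qed.

Lemma is_mixed_lower_shift u x c d w : sle 0 d ->
  is_mixed_lower le sle u x c -> is_mixed_lower le sle u (x + d) w ->
  is_mixed_lower le sle u (c + d) w.
Proof.
move=> d_ge0 [cu [cx c_max]] [wu [wxd w_max]]; split=> //; split.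
  have wd_u : sle (w - d) u.
    apply: sle_trans wu; apply/(ti_subr_ge0 sle_ti).
    by rewrite opprB addrC subrK.
  have wd_x : le (w - d) x by apply/(tiD2r le_ti _ _ d); rewrite subrK.
  by rewrite -(subrK d w); apply/le_ti/c_max.
by move=> v vu vcd; apply: w_max vu (le_trans vcd (le_ti _ cx)).
Qed.

Hypothesis sle0_mixed_lower : forall a b w, sle 0 a -> sle 0 b ->
  is_mixed_lower le sle a b w -> sle 0 w.

Lemma is_mixed_lower_ge u c d w : sle c u -> sle 0 d ->
  is_mixed_lower le sle u (c + d) w -> sle c w.
Proof.
move=> cu d_ge0 /(is_mixed_lowerDr (- c)).
have -> : c + d - c = d by rewrite addrC addKr.
move=> shifted_low; apply/(ti_subr_ge0 sle_ti).
by apply: sle0_mixed_lower shifted_low => //; apply/(ti_subr_ge0 sle_ti).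
Qed.

Lemma is_mixed_lower_mono u x y w1 w2 : sle x y ->
  is_mixed_lower le sle u x w1 -> is_mixed_lower le sle u y w2 -> sle w1 w2.
Proof.
move=> xy w1_low w2_low.
have d_ge0 : sle 0 (y - x) by apply/(ti_subr_ge0 sle_ti).
apply: (is_mixed_lower_ge (proj1 w1_low) d_ge0).
by apply: is_mixed_lower_shift d_ge0 w1_low _; rewrite addrC subrK.
Qed.

Lemma is_mixed_upper_mono u x y w1 w2 : sle x y ->
  is_mixed_upper le sle u x w1 -> is_mixed_upper le sle u y w2 -> sle w1 w2.
Proof.
move=> /(tiN2 sle_ti) yx /is_mixed_upperN w1_low /is_mixed_upperN w2_low.
exact/(tiN2 sle_ti)/(is_mixed_lower_mono yx w2_low w1_low).
Qed.

End MixedEnvelopes.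

Theorem theorem3p3 (G : zmodType) (le sle : G -> G -> Prop) :
  mixed_lattice_group le sle -> quasi_regular le sle ->
  forall x y : G, sle x y ->
  forall u : G,
    (forall w1 w2, is_mixed_lower le sle u x w1 -> is_mixed_lower le sle u y w2 ->
       sle w1 w2) /\
    (forall w1 w2, is_mixed_upper le sle u x w1 -> is_mixed_upper le sle u y w2 ->
       sle w1 w2).
Proof.
move=> [[_ [_ le_trans]] [[_ [_ sle_trans]] [le_ti [sle_ti _]]]] qr x y xy u.
have sle0_lower a b w : sle 0 a -> sle 0 b ->
    is_mixed_lower le sle a b w -> sle 0 w.
  by move=> a_ge0 b_ge0; apply: (proj1 (qr a b a_ge0 b_ge0)).
split=> w1 w2.
  exact: (is_mixed_lower_mono le_trans sle_trans le_ti sle_ti sle0_lower xy).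
exact: (is_mixed_upper_mono le_trans sle_trans le_ti sle_ti sle0_lower xy).
Qed.
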